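(* Let $(G,\cdot,N,\star,\odot)$ be a left skew bracoid, and for $g\in G$ let $\alpha(g):N\to N$ be the map ${}^{\alpha(g)}\eta=\overline{(g\odot e_N)}\star(g\odot\eta)\star\overline{\eta}$. Then for all $g,h\in G$ and $\mu,\eta\in N$: (1) ${}^{\alpha(g)}(\eta\star\mu)=({}^{\alpha(g)}\eta)\star\eta\star({}^{\alpha(g)}\mu)\star\overline{\eta}$; (2) ${}^{\alpha(g)}e_N={}^{\alpha(e_G)}\eta=e_N$; (3) ${}^{\alpha(g)}\overline{\eta}=\overline{\eta}\star\overline{({}^{\alpha(g)}\eta)}\star\eta$; (4) ${}^{\alpha(gh)}\eta=({}^{\alpha(g)}({}^{\alpha(h)}\eta))\star({}^{\alpha(h)}\eta)\star({}^{\alpha(g)}\eta)$.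
   Context: For a group $(N,\star)$, $e_N$ denotes its identity and $\overline{\eta}$ the inverse of $\eta$; for a group $(G,\cdot)$, $e_G$ is its identity. A left skew bracoid is a 5-tuple $(G,\cdot,N,\star,\odot)$ where $(G,\cdot)$ and $(N,\star)$ are groups and $\odot$ is a transitive (left) action of $(G,\cdot)$ on the set $N$ such that $g\odot(\mu\star\eta)=(g\odot\mu)\star\overline{(g\odot e_N)}\star(g\odot\eta)$ for all $g\in G$, $\mu,\eta\in N$. *)

Definition is_group {T : Type} (op : T -> T -> T) (e : T) (inv : T -> T) : Prop :=
  (forall a b c, op a (op b c) = op (op a b) c) /\
  (forall a, op e a = a /\ op a e = a) /\
  (forall a, op (inv a) a = e /\ op a (inv a) = e).

Definition is_left_action {G N : Type} (mulG : G -> G -> G) (eG : G)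
  (act : G -> N -> N) : Prop :=
  (forall x, act eG x = x) /\
  (forall g h x, act (mulG g h) x = act g (act h x)).

Definition is_transitive_action {G N : Type} (act : G -> N -> N) : Prop :=
  forall x y : N, exists g : G, act g x = y.

Definition is_left_skew_bracoid {G N : Type}
  (mulG : G -> G -> G) (eG : G) (invG : G -> G)
  (star : N -> N -> N) (eN : N) (invN : N -> N)
  (act : G -> N -> N) : Prop :=
  is_group mulG eG invG /\
  is_group star eN invN /\
  is_left_action mulG eG act /\
  is_transitive_action act /\
  (forall g mu eta,
     act g (star mu eta) = star (star (act g mu) (invN (act g eN))) (act g eta)).

Definition alpha {G N : Type} (star : N -> N -> N) (eN : N) (invN : N -> N)
  (act : G -> N -> N) (g : G) (eta : N) : N :=
  star (star (invN (act g eN)) (act g eta)) (invN eta).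


(* Write [λ_g η = (g ⊙ e_N)⁻¹ ⋆ (g ⊙ η)]. The bracoid axiom says precisely that
   each [λ_g] is an endomorphism of [(N, ⋆)], and the action axioms give
   [λ_{gh} = λ_g ∘ λ_h] and [λ_{e_G} = id]. Since [α(g) η = λ_g η ⋆ η⁻¹], all four
   identities reduce to computations in the group [N]. *)

Section GroupTheory.

Context {T : Type} {op : T -> T -> T} {e : T} {inv : T -> T}.
Hypothesis HT : is_group op e inv.

Lemma mulgA a b c : op a (op b c) = op (op a b) c.
Proof. apply HT. Qed.

Lemma mul1g a : op e a = a.
Proof. apply HT. Qed.

Lemma mulg1 a : op a e = a.
Proof. apply HT. Qed.

Lemma mulVg a : op (inv a) a = e.
Proof. apply HT. Qed.

Lemma mulgV a : op a (inv a) = e.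
Proof. apply HT. Qed.

Lemma mulKg a b : op (inv a) (op a b) = b.
Proof. now rewrite mulgA, mulVg, mul1g. Qed.

Lemma mulKVg a b : op a (op (inv a) b) = b.
Proof. now rewrite mulgA, mulgV, mul1g. Qed.

Lemma mulgVK a b : op (op a (inv b)) b = a.
Proof. now rewrite <- mulgA, mulVg, mulg1. Qed.

Lemma mulgI a b c : op a b = op a c -> b = c.
Proof. intros H. now rewrite <- (mulKg a b), H, mulKg. Qed.

Lemma invg_unique a b : op a b = e -> inv a = b.
Proof. intros H. apply (mulgI a). now rewrite mulgV. Qed.

Lemma invgK a : inv (inv a) = a.
Proof. apply invg_unique, mulVg. Qed.

Lemma invg1 : inv e = e.
Proof. apply invg_unique, mul1g. Qed.

Lemma invMg a b : inv (op a b) = op (inv b) (inv a).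
Proof. apply invg_unique. now rewrite <- mulgA, mulKVg, mulgV. Qed.

Section Endomorphism.

Variable f : T -> T.
Hypothesis f_morph : forall a b, f (op a b) = op (f a) (f b).

Lemma morph1 : f e = e.
Proof. apply (mulgI (f e)). now rewrite <- f_morph, !mulg1. Qed.

Lemma morphV a : f (inv a) = inv (f a).
Proof. symmetry. apply invg_unique. now rewrite <- f_morph, mulgV, morph1. Qed.

End Endomorphism.

End GroupTheory.

Section SkewBracoid.

Context {G N : Type} (mulG : G -> G -> G) (eG : G).
Context (star : N -> N -> N) (eN : N) (invN : N -> N) (act : G -> N -> N).
Hypothesis HN : is_group star eN invN.
Hypothesis Hact : is_left_action mulG eG act.
Hypothesis Hbr : forall g mu eta,
  act g (star mu eta) = star (star (act g mu) (invN (act g eN))) (act g eta).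

Definition lam (g : G) (eta : N) : N := star (invN (act g eN)) (act g eta).

Local Notation a := (alpha star eN invN act).

Lemma lam_morph g mu eta : lam g (star mu eta) = star (lam g mu) (lam g eta).
Proof. unfold lam. now rewrite Hbr, <- !(mulgA HN). Qed.

Lemma lam1 g : lam g eN = eN.
Proof. exact (morph1 HN _ (lam_morph g)). Qed.

Lemma lamV g eta : lam g (invN eta) = invN (lam g eta).
Proof. exact (morphV HN _ (lam_morph g) eta). Qed.

Lemma lam_eG eta : lam eG eta = eta.
Proof.
  unfold lam. destruct Hact as [act1 _].
  now rewrite !act1, (invg1 HN), (mul1g HN).
Qed.

Lemma act_lam g eta : act g eta = star (act g eN) (lam g eta).
Proof. unfold lam. now rewrite (mulKVg HN). Qed.

Lemma lamM g h eta : lam (mulG g h) eta = lam g (lam h eta).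
Proof.
  unfold lam. destruct Hact as [_ actM].
  pose proof (Hbr g (act h eN) (lam h eta)) as Hsplit.
  rewrite <- act_lam in Hsplit.
  rewrite !actM, Hsplit, <- (mulgA HN), (mulKg HN).
  reflexivity.
Qed.

Lemma alpha_lam g eta : a g eta = star (lam g eta) (invN eta).
Proof. reflexivity. Qed.

Lemma alpha_star g eta mu :
  a g (star eta mu) = star (star (star (a g eta) eta) (a g mu)) (invN eta).
Proof.
  rewrite !alpha_lam, lam_morph, (invMg HN).
  rewrite <- !(mulgA HN), (mulKg HN).
  reflexivity.
Qed.

Lemma alpha_e g : a g eN = eN.
Proof. rewrite alpha_lam, lam1. apply (mulgV HN). Qed.

Lemma alpha_eG eta : a eG eta = eN.
Proof. rewrite alpha_lam, lam_eG. apply (mulgV HN). Qed.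

Lemma alpha_inv g eta :
  a g (invN eta) = star (star (invN eta) (invN (a g eta))) eta.
Proof.
  rewrite !alpha_lam, lamV, (invMg HN), (invgK HN).
  rewrite <- !(mulgA HN), (mulKg HN).
  reflexivity.
Qed.

Lemma alpha_mulG g h eta :
  a (mulG g h) eta = star (star (a g (a h eta)) (a h eta)) (a g eta).
Proof.
  rewrite !alpha_lam, lamM, lam_morph, lamV.
  rewrite (mulgVK HN), <- (mulgA HN), (mulKg HN).
  reflexivity.
Qed.

End SkewBracoid.

Theorem lemma2p4 (G N : Type)
  (mulG : G -> G -> G) (eG : G) (invG : G -> G)
  (star : N -> N -> N) (eN : N) (invN : N -> N)
  (act : G -> N -> N)
  (Hb : is_left_skew_bracoid mulG eG invG star eN invN act) :
  let a := alpha star eN invN act in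
  (forall g eta mu,
     a g (star eta mu) = star (star (star (a g eta) eta) (a g mu)) (invN eta)) /\
  (forall g eta, a g eN = eN /\ a eG eta = eN) /\
  (forall g eta,
     a g (invN eta) = star (star (invN eta) (invN (a g eta))) eta) /\
  (forall g h eta,
     a (mulG g h) eta = star (star (a g (a h eta)) (a h eta)) (a g eta)).
Proof.
  destruct Hb as [_ [HN [Hact [_ Hbr]]]].
  repeat split; intros.
  - now apply alpha_star.
  - now apply alpha_e.
  - now apply (alpha_eG mulG eG).
  - now apply alpha_inv.
  - now apply (alpha_mulG mulG eG).
Qed.
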